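(* Let $\alpha,\beta$ satisfy $\alpha+\beta=-1$. For every $n\geq1$, $$\sum_{\sigma\in\mathfrak S_{n+1}}u^{{\rm M}(\sigma)}\alpha^{{\rm LRmin}(\sigma)-1}\beta^{{\rm RLmin}(\sigma)-1}=\begin{cases}(1-u)^{\lfloor n/2\rfloor},& n\text{ even},\\ -(1-u)^{\lfloor n/2\rfloor},& n\text{ odd}.\end{cases}$$
   Context: For $\sigma=\sigma_1\cdots\sigma_m\in\mathfrak S_m$: ${\rm M}(\sigma)$ (interior peaks) is the number of $i$ with $1<i<m$ and $\sigma_{i-1}<\sigma_i>\sigma_{i+1}$; ${\rm LRmin}(\sigma)$ is the number of $i$ with $\sigma_j>\sigma_i$ for all $j<i$; ${\rm RLmin}(\sigma)$ is the number of $i$ with $\sigma_j>\sigma_i$ for all $j>i$. *)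

From HB Require Import structures.
From mathcomp Require Import all_boot all_order all_algebra all_fingroup.
Set Implicit Arguments. Unset Strict Implicit. Unset Printing Implicit Defensive.

(* A permutation sigma of {0,...,m-1} (values shifted by one from the paper's
   {1,...,m}, which does not affect the order-based statistics) is viewed as the
   word sigma_0 sigma_1 ... sigma_{m-1}; positions are 0-indexed. *)
Definition perm_word (m : nat) (s : {perm 'I_m}) : seq nat :=
  [seq val (s i) | i <- enum 'I_m].

Definition peaks (w : seq nat) : nat :=
  #|[set i : 'I_(size w) | (0 < val i) && (val i < (size w).-1) &&
       (nth 0 w (val i).-1 < nth 0 w (val i)) &&
       (nth 0 w (val i).+1 < nth 0 w (val i))]|.

Definition lrmin (w : seq nat) : nat :=
  #|[set i : 'I_(size w) |
       [forall j : 'I_(size w), (val j < val i) ==> (nth 0 w (val i) < nth 0 w (val j))]]|.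

Definition rlmin (w : seq nat) : nat :=
  #|[set i : 'I_(size w) |
       [forall j : 'I_(size w), (val i < val j) ==> (nth 0 w (val i) < nth 0 w (val j))]]|.

From HB Require Import structures.
From mathcomp Require Import all_boot all_order all_algebra all_fingroup.
From mathcomp Require Import zify ring.
Import GRing.Theory.

Set Implicit Arguments.
Unset Strict Implicit.
Unset Printing Implicit Defensive.

(* Every permutation of {0..k} arises exactly once by inserting the largest
   letter k into a permutation w of {0..k-1}.  Inserting k in front (resp. at
   the back) creates one more left-to-right (resp. right-to-left) minimum and
   keeps the peaks; an interior slot keeps both minima counts, and it keeps the
   number p of peaks of w when it lies next to one of the 2p sides of a peak
   and raises it by one otherwise.  Hence, when alpha + beta = -1, the
   polynomials P_k(X) = sum_w alpha^(lrmin w - 1) beta^(rlmin w - 1) X^(peaks w)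
   satisfy P_(k+1) = ((k-1) X - 1) P_k + 2 X (1 - X) P_k', the factor p being
   produced by X d/dX.  Since (1 - X) ((1 - X)^m)' = -m (1 - X)^m, induction
   gives P_(n+1) = (-1)^n (1 - X)^(n/2). *)

Section Insertion.
Variable T : eqType.

Definition insert (i : nat) (x : T) (w : seq T) := take i w ++ x :: drop i w.

Lemma perm_insert i x w : perm_eq (insert i x w) (x :: w).
Proof. by rewrite /insert -cat1s perm_catCA /= cat_take_drop. Qed.

Lemma index_insert i x w : x \notin w -> i <= size w -> index x (insert i x w) = i.
Proof.
move=> xNw le_iw; rewrite /insert index_cat ifN ?size_takel //= ?eqxx ?addn0 //.
by apply: contra xNw; apply: mem_take.
Qed.

Lemma rem_insert i x w : x \notin w -> i <= size w -> rem x (insert i x w) = w.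
Proof.
move=> xNw le_iw; rewrite remE index_insert //.
rewrite /insert take_size_cat ?size_takel // -cat_rcons drop_size_cat ?cat_take_drop //.
by rewrite size_rcons size_takel.
Qed.

Lemma insert_index_rem x v : x \in v -> insert (index x v) x (rem x v) = v.
Proof.
move=> xv; have lt_iv : index x v < size v by rewrite index_mem.
rewrite remE /insert take_size_cat ?size_takel ?(ltnW lt_iv) //.
rewrite drop_size_cat ?size_takel ?(ltnW lt_iv) //.
have := drop_nth x lt_iv; rewrite nth_index // => <-; exact: cat_take_drop.
Qed.

End Insertion.

Lemma card_set_ord_val n (P : pred nat) :
  #|[set i : 'I_n | P (val i)]| = count P (iota 0 n).
Proof. by rewrite cardsE cardE /enum_mem size_filter -val_enum_ord count_map enumT. Qed.

Lemma forall_ord_lt n i (Q : pred nat) : i <= n ->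
  [forall j : 'I_n, (val j < i) ==> Q (val j)] = all Q (iota 0 i).
Proof.
move=> le_in; apply/forallP/allP => [H j | H j].
  rewrite mem_iota /= => ltji.
  by have := H (Ordinal (leq_trans ltji le_in)); rewrite /= ltji.
by apply/implyP => ltji; apply: H; rewrite mem_iota.
Qed.

Lemma forall_ord_gt n i (Q : pred nat) :
  [forall j : 'I_n, (i < val j) ==> Q (val j)] = all Q (iota i.+1 (n - i.+1)).
Proof.
apply/forallP/allP => [H j | H j].
  rewrite mem_iota => /andP[ltij ltjn].
  have ltjn' : j < n by lia.
  by have := H (Ordinal ltjn'); rewrite /= ltij.
apply/implyP => ltij; apply: H; rewrite mem_iota ltij /=.
have := ltn_ord j; lia.
Qed.

Definition is_peak (w : seq nat) (i : nat) : bool :=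
  [&& 0 < i, i < (size w).-1, nth 0 w i.-1 < nth 0 w i & nth 0 w i.+1 < nth 0 w i].

Lemma peaksE w : peaks w = count (is_peak w) (iota 0 (size w)).
Proof.
rewrite -card_set_ord_val; apply: eq_card => i.
by rewrite !inE /is_peak !andbA.
Qed.

Lemma lrminE w : lrmin w =
  count (fun i => all (fun j => nth 0 w i < nth 0 w j) (iota 0 i)) (iota 0 (size w)).
Proof.
rewrite /lrmin (card_set_ord_val _ (fun i => [forall j : 'I_(size w),
   (val j < i) ==> (nth 0 w i < nth 0 w (val j))])).
apply: eq_in_count => i; rewrite mem_iota => /andP[_ lti].
exact: forall_ord_lt (ltnW lti).
Qed.

Lemma rlminE w : rlmin w =
  count (fun i => all (fun j => nth 0 w i < nth 0 w j) (iota i.+1 (size w - i.+1)))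
    (iota 0 (size w)).
Proof.
rewrite /rlmin (card_set_ord_val _ (fun i => [forall j : 'I_(size w),
   (i < val j) ==> (nth 0 w i < nth 0 w (val j))])).
by apply: eq_count => i; exact: (forall_ord_gt _ _ (fun j => nth 0 w i < nth 0 w j)).
Qed.

Lemma all_nth_iota (P : pred nat) w :
  all P w = all (fun j => P (nth 0 w j)) (iota 0 (size w)).
Proof. by rewrite -{1}(mkseq_nth 0 w) /mkseq all_map. Qed.

Lemma rlmin_cons x w : rlmin (x :: w) = all (fun y => x < y) w + rlmin w.
Proof.
rewrite !rlminE /= subn1 /= (iotaDl 1 0) all_map [in RHS]all_nth_iota.
congr (_ + _); rewrite count_map; apply: eq_count => i /=.
by rewrite subSS (iotaDl 1) all_map.
Qed.

Lemma lrmin_rcons w x : lrmin (rcons w x) = all (fun y => x < y) w + lrmin w.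
Proof.
rewrite !lrminE size_rcons -addn1 iotaD count_cat /= add0n addn0 addnC.
congr (_ + _).
  rewrite nth_rcons ltnn eqxx [in RHS]all_nth_iota; congr (nat_of_bool _).
  by apply: eq_in_all => j; rewrite mem_iota nth_rcons => /andP[_ ->].
apply: eq_in_count => i; rewrite mem_iota nth_rcons => /andP[_ lti]; rewrite lti.
apply: eq_in_all => j; rewrite mem_iota nth_rcons => /andP[_ ltj].
by rewrite (ltn_trans ltj lti).
Qed.

Definition head_peak (x : nat) (w : seq nat) : bool :=
  if w is y :: z :: _ then (x < y) && (z < y) else false.

Lemma is_peak_cons x w j :
  is_peak (x :: w) j.+1 = if j == 0 then head_peak x w else is_peak w j.
Proof.
rewrite /is_peak /=; case: j => [|j] /=.
  by case: w => [|y [|z w]] //=; rewrite andbT.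
by case: w => [|y w].
Qed.

Lemma peaks_cons x w : peaks (x :: w) = head_peak x w + peaks w.
Proof.
rewrite !peaksE /= (iotaDl 1 0) count_map.
rewrite (eq_count (a2 := fun j => if j == 0 then head_peak x w else is_peak w j));
  last by move=> j /=; rewrite is_peak_cons.
by case: w => [|y w] //=; rewrite (iotaDl 1 0) !count_map.
Qed.

Section InsertMax.
Variable k : nat.

Lemma all_gt_max (w : seq nat) :
  all (fun y => y < k) w -> all (fun y => k < y) w = (w == [::]).
Proof.
case: w => [|y w] //= /andP[lt_yk _].
by apply/negbTE; rewrite negb_and -leqNgt ltnW.
Qed.

Lemma lrmin_insert_max a b : all (fun y => y < k) (a ++ b) ->
  lrmin (a ++ k :: b) = (a == [::]) + lrmin (a ++ b).
Proof.
elim/last_ind: b => [|b y IH].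
  by rewrite !cats0 cats1 lrmin_rcons => /all_gt_max ->.
rewrite -!rcons_cat -rcons_cons -rcons_cat !lrmin_rcons all_rcons => /andP[lt_yk ab_k].
rewrite IH // !all_cat /= lt_yk /=; lia.
Qed.

Lemma rlmin_insert_max a b : all (fun y => y < k) (a ++ b) ->
  rlmin (a ++ k :: b) = (b == [::]) + rlmin (a ++ b).
Proof.
elim: a => [|x a IH] /=; first by rewrite rlmin_cons => /all_gt_max ->.
move=> /andP[lt_xk ab_k]; rewrite !rlmin_cons IH // !all_cat /= lt_xk /=; lia.
Qed.

Lemma peaks_cons_max w : all (fun y => y < k) w -> peaks (k :: w) = peaks w.
Proof.
rewrite peaks_cons; case: w => [|y [|z w]] //= /and3P[lt_yk _ _].
by rewrite ltnNge (ltnW lt_yk).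
Qed.

Lemma peaks_rcons_max w : all (fun y => y < k) w -> peaks (rcons w k) = peaks w.
Proof.
elim: w => [|x w IH] /=; first by rewrite !peaksE.
move=> /andP[lt_xk w_k]; rewrite !peaks_cons IH //; congr (_ + _).
case: w w_k {IH} => [|y [|z w]] //=.
by rewrite andbT => lt_yk; rewrite [k < y]ltnNge (ltnW lt_yk) andbF.
Qed.

Lemma peaks_insert_max i w : all (fun y => y < k) w -> 0 < i < size w ->
  peaks (insert i k w) + is_peak w i.-1 + is_peak w i = (peaks w).+1.
Proof.
rewrite /insert; elim: w i => [|x w IH] [|i] //= /andP[lt_xk w_k] lt_iw.
rewrite !peaks_cons.
case: i lt_iw => [|i] lt_iw.
  rewrite take0 drop0 /= peaks_cons_max // (is_peak_cons x w 0) /=.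
  case: w lt_iw {IH} w_k => [|y w] //= _ /andP[lt_yk _]; rewrite lt_xk lt_yk /=; lia.
have := IH i.+1 w_k lt_iw; rewrite !is_peak_cons /=.
case: i lt_iw => [|i] lt_iw IHi.
  case: w lt_iw w_k {IH} IHi => [|y w] //= lt_iw /andP[lt_yk _].
  by rewrite take0 /= [k < y]ltnNge (ltnW lt_yk) andbF /=; lia.
by case: w lt_iw w_k {IH} IHi => [|y [|z w]] //= *; lia.
Qed.

End InsertMax.

Lemma lrmin_gt0 w : w != [::] -> 0 < lrmin w.
Proof.
elim/last_ind: w => [|w x IH] // _; rewrite lrmin_rcons.
have [->|/IH] := eqVneq w [::]; [by rewrite lrminE | lia].
Qed.

Lemma rlmin_gt0 w : w != [::] -> 0 < rlmin w.
Proof.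
elim: w => [|x w IH] // _; rewrite rlmin_cons.
have [->|/IH] := eqVneq w [::]; [by rewrite rlminE | lia].
Qed.

Lemma no_adjacent_peaks w i : 0 < i -> is_peak w i.-1 && is_peak w i = false.
Proof. by case: i => // i _; apply/negbTE; rewrite /is_peak /=; lia. Qed.

Definition next_to_peak (w : seq nat) (i : nat) : bool := is_peak w i.-1 || is_peak w i.

Lemma count_next_to_peak w :
  count (next_to_peak w) (iota 1 (size w).-1) = 2 * peaks w.
Proof.
have no_adjacent :
    count (predI (is_peak w \o predn) (is_peak w)) (iota 1 (size w).-1) = 0.
  rewrite (eq_in_count (a2 := pred0)) ?count_pred0 // => i.
  by rewrite mem_iota => /andP[i_gt0 _] /=; rewrite no_adjacent_peaks.
have peaks_from1 : count (is_peak w) (iota 1 (size w).-1) = peaks w.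
  by rewrite peaksE; case: (size w) => //= s; rewrite add0n.
have peaks_upto_last : count (is_peak w \o predn) (iota 1 (size w).-1) = peaks w.
  rewrite peaksE; case sw: (size w) => [|s] //.
  rewrite -[s.+1]addn1 iotaD count_cat /= [is_peak w s](_ : _ = false) ?addn0;
    last by rewrite /is_peak sw ltnn !andbF.
  by rewrite addn1 (iotaDl 1 0) count_map; apply: eq_count.
have := count_predUI (is_peak w \o predn) (is_peak w) (iota 1 (size w).-1).
rewrite no_adjacent addn0 peaks_from1 peaks_upto_last addnn -mul2n => <-.
by apply: eq_count.
Qed.


Lemma perm_iotaS k : perm_eq (iota 0 k.+1) (k :: iota 0 k).
Proof. by rewrite -addn1 iotaD cats1 perm_rcons. Qed.

Lemma permutations_iotaS k :
  perm_eq (permutations (iota 0 k.+1))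
          [seq insert i k w | w <- permutations (iota 0 k), i <- iota 0 k.+1].
Proof.
have kNperm w : perm_eq w (iota 0 k) -> k \notin w.
  by move=> pw; rewrite (perm_mem pw) mem_iota ltnn andbF.
apply: uniq_perm; rewrite ?permutations_uniq //.
  apply: allpairs_uniq; rewrite ?permutations_uniq ?iota_uniq //.
  move=> _ _ /allpairsP[[w i] [+ + ->]] /allpairsP[[v j] [+ + ->]] /=.
  rewrite !mem_permutations !mem_iota /= !ltnS => pw le_ik pv le_jk e.
  have kNw := kNperm _ pw; have kNv := kNperm _ pv.
  have le_iw : i <= size w by rewrite (perm_size pw) size_iota.
  have le_jv : j <= size v by rewrite (perm_size pv) size_iota.
  have e_ij : i = j by rewrite -(index_insert kNw le_iw) e index_insert.
  by rewrite -(rem_insert kNw le_iw) e rem_insert ?e_ij.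
move=> v; rewrite mem_permutations; apply/idP/allpairsP => [pv | [[w i] [+ _ ->]]].
  have kv : k \in v by rewrite (perm_mem pv) mem_iota /=.
  exists (rem k v, index k v); rewrite insert_index_rem //; split=> //.
    rewrite mem_permutations -(perm_cons k).
    by rewrite -(permPl (perm_to_rem kv)) (permPl pv) perm_iotaS.
  change (index k v \in iota 0 k.+1).
  by rewrite mem_iota /= -(size_iota 0 k.+1) -(perm_size pv) index_mem.
rewrite mem_permutations => pw.
by rewrite (permPl (perm_insert i k w)) (permPr (perm_iotaS k)) perm_cons.
Qed.

Lemma perm_word_inj m : injective (@perm_word m).
Proof.
move=> s t /eq_in_map e; apply/permP => i; apply: val_inj.
by apply: e; rewrite mem_enum.
Qed.

Lemma perm_word_iota m (s : {perm 'I_m}) : perm_eq (perm_word s) (iota 0 m).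
Proof.
rewrite /perm_word -val_enum_ord (map_comp val s) perm_map //.
apply: uniq_perm; rewrite ?(map_inj_uniq (@perm_inj _ s)) ?enum_uniq //.
move=> x; rewrite mem_enum; apply/mapP; exists (s^-1 x)%g; first by rewrite mem_enum.
by rewrite permKV.
Qed.

Lemma perm_wordP m v :
  perm_eq v (iota 0 m) -> exists s : {perm 'I_m}, perm_word s = v.
Proof.
move=> pv; have sv : size v = m by rewrite (perm_size pv) size_iota.
have uv : uniq v by rewrite (perm_uniq pv) iota_uniq.
have lt_vm (i : 'I_m) : nth 0 v i < m.
  have : nth 0 v i \in v by rewrite mem_nth ?sv.
  by rewrite (perm_mem pv) mem_iota.
pose f (i : 'I_m) := Ordinal (lt_vm i).
have f_inj : injective f.
  by move=> i j [/eqP]; rewrite nth_uniq ?sv // => /eqP/val_inj.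
exists (perm f_inj); rewrite /perm_word (eq_map (g := nth 0 v \o val)).
  by rewrite map_comp val_enum_ord -sv -/(mkseq _ _) mkseq_nth.
by move=> i; rewrite permE.
Qed.

Lemma perm_eq_perm_words m :
  perm_eq [seq perm_word s | s : {perm 'I_m}] (permutations (iota 0 m)).
Proof.
apply: uniq_perm; rewrite ?permutations_uniq //.
  by rewrite map_inj_uniq ?enum_uniq //; exact: perm_word_inj.
move=> v; rewrite mem_permutations; apply/mapP/idP => [[s _ ->] | /perm_wordP[s <-]].
  exact: perm_word_iota.
by exists s; rewrite ?mem_enum.
Qed.

Local Open Scope ring_scope.

Section PeakStep.
Variable R : comNzRingType.
Implicit Types P : {poly R}.

Definition peak_step (k : nat) P : {poly R} :=
  'X * P *+ k.-1 - P + 'X * (1 - 'X) * P^`() *+ 2.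

Fact peak_step_is_linear k : linear (peak_step k).
Proof.
move=> a P Q; rewrite /peak_step derivD derivZ -!mul_polyC; ring.
Qed.

HB.instance Definition _ k :=
  GRing.isLinear.Build R {poly R} {poly R} _ (peak_step k) (peak_step_is_linear k).

Lemma mulX_derivXn n : 'X * ('X^n)^`() = 'X^n *+ n :> {poly R}.
Proof. by rewrite derivXn; case: n => [|n]; rewrite ?mulr0n ?mulr0 // mulrnAr -exprS. Qed.

Lemma peak_stepXn k p :
  peak_step k 'X^p = 'X^(p.+1) *+ k.-1 - 'X^p + ('X^p - 'X^(p.+1)) *+ p.*2.
Proof.
rewrite /peak_step -mulrA [(1 - 'X) * _]mulrC mulrA mulX_derivXn.
by rewrite exprS -mul2n; ring.
Qed.

Lemma mul_subX_deriv_exp m :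
  (1 - 'X) * ((1 - 'X) ^+ m)^`() = - (1 - 'X) ^+ m *+ m :> {poly R}.
Proof.
rewrite deriv_exp derivB derivC derivX sub0r mulN1r.
case: m => [|m]; first by rewrite !mulr0n mulr0.
by rewrite mulrnAr mulrN -exprS mulNrn.
Qed.

Lemma peak_step_subX_exp n :
  peak_step n.+1 ((1 - 'X) ^+ n./2) = - (1 - 'X) ^+ n.+1./2.
Proof.
rewrite /peak_step -mulrA mul_subX_deriv_exp -uphalfE uphalf_half.
rewrite -[n.+1.-1](odd_double_half n) -mul2n.
by case: (odd n); rewrite ?add1n ?add0n ?exprS; ring.
Qed.

End PeakStep.

Section PeakPolynomial.
Variables (R : comNzRingType) (alpha beta : R).

Hypothesis sum_ab : alpha + beta = -1.

Definition minima_weight (w : seq nat) : R :=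
  alpha ^+ (lrmin w).-1 * beta ^+ (rlmin w).-1.

Definition peak_poly (k : nat) : {poly R} :=
  \sum_(w <- permutations (iota 0 k)) minima_weight w *: 'X^(peaks w).

Section InsertLargest.
Variable w : seq nat.
Hypotheses (w_lt : all (fun y => y < size w)%N w) (w_neq0 : w != [::]).
Let k := size w.

Lemma minima_weight_cons_max : minima_weight (k :: w) = alpha * minima_weight w.
Proof.
rewrite /minima_weight (@lrmin_insert_max _ [::] w w_lt).
rewrite (@rlmin_insert_max _ [::] w w_lt).
rewrite (negbTE w_neq0) add0n /=.
by case: (lrmin w) (lrmin_gt0 w_neq0) => // l _; rewrite exprS mulrA.
Qed.

Lemma minima_weight_rcons_max : minima_weight (rcons w k) = beta * minima_weight w.
Proof.
have w_lt' : all (fun y => y < k)%N (w ++ [::]) by rewrite cats0.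
rewrite /minima_weight -cats1 (@lrmin_insert_max _ w [::] w_lt').
rewrite (@rlmin_insert_max _ w [::] w_lt').
rewrite cats0 (negbTE w_neq0) add0n /=.
by case: (rlmin w) (rlmin_gt0 w_neq0) => // r _; rewrite exprS mulrCA.
Qed.

Lemma minima_weight_insert_interior i : (0 < i < k)%N ->
  minima_weight (insert i k w) = minima_weight w.
Proof.
move=> /andP[i_gt0 lt_ik].
have w_lt' : all (fun y => y < k)%N (take i w ++ drop i w) by rewrite cat_take_drop.
have take_neq0 : (take i w == [::]) = false.
  by rewrite -size_eq0 size_takel ?(ltnW lt_ik) // eqn0Ngt i_gt0.
have drop_neq0 : (drop i w == [::]) = false.
  by rewrite -size_eq0 size_drop subn_eq0 leqNgt lt_ik.
rewrite /minima_weight /insert (lrmin_insert_max w_lt') (rlmin_insert_max w_lt').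
by rewrite take_neq0 drop_neq0 cat_take_drop.
Qed.

Lemma peaks_insert_interior i : (0 < i < k)%N ->
  peaks (insert i k w) = if next_to_peak w i then peaks w else (peaks w).+1.
Proof.
move=> lt_ik; have := peaks_insert_max w_lt lt_ik.
have := no_adjacent_peaks w (proj1 (andP lt_ik)).
rewrite /next_to_peak.
by case: (is_peak w i.-1); case: (is_peak w i) => //= _; rewrite ?addn0 ?addn1 => -[].
Qed.

Lemma sum_insert_interior :
  \sum_(i <- iota 1 k.-1) 'X^(peaks (insert i k w))
  = 'X^(peaks w) *+ (peaks w).*2 + 'X^((peaks w).+1) *+ (k.-1 - (peaks w).*2) :> {poly R}.
Proof.
have slot_peaks i : i \in iota 1 k.-1 ->
    peaks (insert i k w) = if next_to_peak w i then peaks w else (peaks w).+1.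
  by rewrite mem_iota => lt_ik; apply: peaks_insert_interior; lia.
rewrite (eq_big_seq (fun i =>
    if next_to_peak w i then 'X^(peaks w) else 'X^((peaks w).+1))); last first.
  by move=> i /slot_peaks ->; case: ifP.
rewrite (bigID (next_to_peak w)) /= (eq_bigr (fun=> 'X^(peaks w))); last by move=> i ->.
rewrite [X in _ + X](eq_bigr (fun=> 'X^((peaks w).+1))); last by move=> i /negbTE ->.
have count_rest :
    count (predC (next_to_peak w)) (iota 1 k.-1) = (k.-1 - (peaks w).*2)%N.
  have := count_predC (next_to_peak w) (iota 1 k.-1).
  by rewrite size_iota count_next_to_peak; lia.
by rewrite !big_const_seq !iter_addr_0 count_next_to_peak -count_rest mul2n.
Qed.

Lemma sum_insert_max :
  \sum_(i <- iota 0 k.+1) minima_weight (insert i k w) *: 'X^(peaks (insert i k w))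
  = minima_weight w *: peak_step k 'X^(peaks w).
Proof.
have k_gt0 : (0 < k)%N by rewrite lt0n size_eq0.
have -> : iota 0 k.+1 = 0 :: iota 1 k.-1 ++ [:: k].
  case: (k) k_gt0 => // n _; change (0 :: iota 1 n.+1 = 0 :: iota 1 n ++ [:: n.+1]).
  by rewrite -[n.+1]addn1 iotaD addnC.
rewrite big_cons big_cat big_seq1 /=.
rewrite {1 2}/insert take0 drop0 /=.
have -> : insert k k w = rcons w k by rewrite /insert take_size drop_size cats1.
rewrite minima_weight_cons_max minima_weight_rcons_max peaks_cons_max ?peaks_rcons_max //.
rewrite (eq_big_seq (fun i => minima_weight w *: 'X^(peaks (insert i k w)))); last first.
  by move=> i; rewrite mem_iota => lt_ik; rewrite minima_weight_insert_interior //; lia.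
rewrite -scaler_sumr sum_insert_interior peak_stepXn mulrnBr; last first.
  by rewrite -mul2n -count_next_to_peak (leq_trans (count_size _ _)) ?size_iota.
have -> : alpha = -1 - beta by rewrite -sum_ab addrK.
by rewrite -!mul_polyC !rmorphM /= rmorphB rmorphN rmorph1 /=; ring.
Qed.

End InsertLargest.

Lemma peak_poly_rec k : (0 < k)%N -> peak_poly k.+1 = peak_step k (peak_poly k).
Proof.
move=> k_gt0; rewrite /peak_poly (perm_big _ (permutations_iotaS k)) big_allpairs_dep /=.
rewrite linear_sum; apply: eq_big_seq => w; rewrite mem_permutations => pw.
have size_w : size w = k by rewrite (perm_size pw) size_iota.
rewrite linearZ /= -size_w sum_insert_max //.
  by apply/allP => y; rewrite (perm_mem pw) mem_iota size_w.
by rewrite -size_eq0 size_w -lt0n.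
Qed.

Lemma peak_poly_closed n : peak_poly n.+1 = (-1) ^+ n *: (1 - 'X) ^+ n./2.
Proof.
elim: n => [|n IH].
  by rewrite /peak_poly big_seq1 /minima_weight lrminE rlminE peaksE /= !expr0 mulr1.
by rewrite peak_poly_rec // IH linearZ /= peak_step_subX_exp scalerN -scaleNr -mulN1r -exprS.
Qed.

End PeakPolynomial.

Theorem theorem1p6 (R : comNzRingType) (u alpha beta : R) (n : nat) :
  alpha + beta = -1 -> (1 <= n)%N ->
  \sum_(s : {perm 'I_n.+1})
     u ^+ peaks (perm_word s) * alpha ^+ (lrmin (perm_word s)).-1
       * beta ^+ (rlmin (perm_word s)).-1
  = (if odd n then - (1 - u) ^+ n./2 else (1 - u) ^+ n./2).
Proof.
move=> sum_ab _.
have -> : (if odd n then - (1 - u) ^+ n./2 else (1 - u) ^+ n./2)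
          = (-1) ^+ n * (1 - u) ^+ n./2.
  by rewrite -signr_odd; case: (odd n); rewrite ?mulN1r ?mul1r.
have := congr1 (horner^~ u) (peak_poly_closed sum_ab n).
rewrite /peak_poly -(perm_big _ (perm_eq_perm_words n.+1)) big_image horner_sum.
rewrite hornerZ horner_exp !hornerE => <-.
by apply: eq_bigr => s _; rewrite hornerZ hornerXn [RHS]mulrC mulrA.
Qed.
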